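(* Let $\mathcal{S}\subseteq\mathcal{L}$ and $\phi\in\mathcal{L}$, let $\mathcal{AF}_{\vdash}=(\vdash,\overline{\cdot},\mathsf{id})$ be contrapositable with $\vdash$ satisfying Cut, and suppose that for every maximal $\mathcal{AF}_{\vdash}(\mathcal{S})$-consistent set $\Theta$ there is $\Theta'\subseteq\Theta$ with $\Theta'\vdash\phi$. Then the maximal $\mathcal{AF}_{\vdash}(\mathcal{S})$-consistent subsets of $\mathcal{S}$ are exactly the maximal $\mathcal{AF}_{\vdash^{+\phi}}(\mathcal{S})$-consistent subsets of $\mathcal{S}$.
   Context: $\mathcal{L}$ is a set of formulas; ${\vdash}\subseteq\wp_{\sf fin}(\mathcal{L})\times\mathcal{L}$ is arbitrary and $\overline{\cdot}:\mathcal{L}\to\wp(\mathcal{L})$. $\vdash^{+\phi}$ is the transitive closure of ${\vdash}\cup\{(\emptyset,\phi)\}$. Cut: for every $\phi$ and finite $\Gamma,\Delta$, if $\Gamma\vdash\phi$ and $\Delta\vdash^{+\phi}\gamma$ then $\Gamma\cup\Delta\vdash\gamma$. Contrapositable: for all finite $\Theta$, if $\Theta\vdash\gamma'$ with $\gamma'\in\overline{\gamma}$, then for every $\sigma\in\Theta$, $(\Theta\cup\{\gamma\})\setminus\{\sigma\}\vdash\sigma'$ for some $\sigma'\in\overline{\sigma}$. For a relation $\vdash'$ (here $\vdash$ or $\vdash^{+\phi}$), $\Theta\subseteq\mathcal{S}$ is $\mathcal{AF}_{\vdash'}(\mathcal{S})$-inconsistent iff there are $\Theta'\subseteq\Theta$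 and $\gamma\in\Theta'$ with $\Theta'\setminus\{\gamma\}\vdash'\gamma'$ for some $\gamma'\in\overline{\gamma}$, consistent otherwise; maximal consistent = consistent with no consistent proper superset within $\mathcal{S}$. *)

From HB Require Import structures.
From mathcomp Require Import all_boot finmap.
Set Implicit Arguments. Unset Strict Implicit. Unset Printing Implicit Defensive.
Local Open Scope fset_scope.

Definition drel (L : choiceType) := {fset L} -> L -> Prop.

(* |-^{+phi}: closure of |- U {(emptyset, phi)} under transitivity
   (cut-composition of derivations). *)
Inductive plus_rel (L : choiceType) (der : drel L) (phi : L) : {fset L} -> L -> Prop :=
| plus_base (G : {fset L}) (g : L) : der G g -> plus_rel der phi G g
| plus_phi : plus_rel der phi fset0 phi
| plus_trans (G D : {fset L}) (psi g : L) :
    plus_rel der phi G psi -> plus_rel der phi D g -> psi \in D ->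
    plus_rel der phi (G `|` (D `\ psi)) g.

Definition cut_rule (L : choiceType) (der : drel L) : Prop :=
  forall (phi : L) (G D : {fset L}) (g : L),
    der G phi -> plus_rel der phi D g -> der (G `|` D) g.

(* Contrapositability; [bar g g'] means g' \in overline{g}. *)
Definition contrapositable (L : choiceType) (der : drel L) (bar : L -> L -> Prop) : Prop :=
  forall (T : {fset L}) (g g' : L), bar g g' -> der T g' ->
    forall s : L, s \in T -> exists s' : L, bar s s' /\ der ((T `|` [fset g]) `\ s) s'.

Definition af_inconsistent (L : choiceType) (der : drel L) (bar : L -> L -> Prop)
  (Th : L -> Prop) : Prop :=
  exists (T' : {fset L}) (g : L),
    (forall x, x \in T' -> Th x) /\ g \in T' /\
    exists g' : L, bar g g' /\ der (T' `\ g) g'.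

Definition af_consistent (L : choiceType) (der : drel L) (bar : L -> L -> Prop)
  (S Th : L -> Prop) : Prop :=
  (forall x, Th x -> S x) /\ ~ af_inconsistent der bar Th.

Definition af_max_consistent (L : choiceType) (der : drel L) (bar : L -> L -> Prop)
  (S Th : L -> Prop) : Prop :=
  af_consistent der bar S Th /\
  forall Th2 : L -> Prop, af_consistent der bar S Th2 ->
    (forall x, Th x -> Th2 x) -> (forall x, Th2 x -> Th x).

(* A maximal consistent set Th derives phi from some finite T0 included in Th,
   so by Cut a |-^{+phi} derivation of a contrary from a finite part of Th
   becomes a |- derivation from T0 and that part; contrapositability turns it
   into an inconsistency witness inside Th.  Hence maximal |- consistent sets
   are |-^{+phi} consistent.  Since |-^{+phi} consistency implies |- consistency
   and, by Zorn's lemma, every |- consistent set extends to a maximal one, the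
   two families of maximal consistent sets coincide. *)
From mathcomp Require Import all_boot finmap.
From mathcomp Require Import boolp classical_sets.

Set Implicit Arguments.
Unset Strict Implicit.
Unset Printing Implicit Defensive.

Section MaximalConsistent.
Local Open Scope classical_set_scope.

Lemma Zorn_bigcup_above (T : Type) (P : set (set T)) (B : set T) :
  (forall F, F `<=` P -> total_on F subset -> F !=set0 ->
     P (\bigcup_(X in F) X)) ->
  P B -> exists A, [/\ P A, B `<=` A & forall C, P C -> A `<=` C -> C `<=` A].
Proof.
move=> P_chain PB.
(* Shifting by B makes the empty chain harmless: its union is then B itself. *)
have [|A [PAB Amax]] := @Zorn_bigcup T (fun X => P (X `|` B)).
  move=> F FP Ftot /=; have [F0|F0] := pselect (F !=set0); last first.
    by rewrite setUidr // => x [X FX _]; case: F0; exists X.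
  rewrite -bigcupUl // -(bigcup_image F (setU^~ B) id).
  apply: P_chain.
  - by move=> _ [X FX <-]; exact: FP.
  - move=> _ _ [X FX <-] [Y FY <-].
    by case: (Ftot X Y FX FY) => XY; [left|right]; exact: setSU.
  - by case: F0 => X FX; exists (X `|` B), X.
exists (A `|` B); split=> // C PC ABC.
apply: contrapT => CAB; apply: (Amax C); last first.
  by rewrite setUidl //; apply: subset_trans ABC; exact: subsetUr.
split; first by apply: subset_trans ABC; exact: subsetUl.
by move=> CA; apply: CAB; apply: subset_trans CA _; exact: subsetUl.
Qed.

Lemma chain_subset_bigcup (T : eqType) (F : set (set T)) (s : seq T) :
  total_on F subset -> F !=set0 ->
  (forall x, x \in s -> (\bigcup_(X in F) X) x) ->
  exists2 X, F X & forall x, x \in s -> X x.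
Proof.
move=> Ftot [X0 FX0]; elim: s => [|a s IHs] sF; first by exists X0.
have [Y FY sY] : exists2 Y, F Y & forall x, x \in s -> Y x.
  by apply: IHs => x xs; apply: sF; rewrite inE xs orbT.
have [Z FZ Za] := sF a (mem_head a s).
have [YZ|ZY] := Ftot Y Z FY FZ.
- by exists Z => // x; rewrite inE => /predU1P[->|/sY/YZ].
- by exists Y => // x; rewrite inE => /predU1P[->|/sY]//; exact: ZY.
Qed.

Variables (L : choiceType) (bar : L -> L -> Prop).

Lemma af_inconsistentS (der : drel L) (Th Th' : L -> Prop) :
  Th `<=` Th' -> af_inconsistent der bar Th -> af_inconsistent der bar Th'.
Proof.
move=> ThTh' [T [g [TTh [gT bar_der]]]].
by exists T, g; split=> // x /TTh /ThTh'.
Qed.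

Lemma af_consistent_subrel (der der' : drel L) (S Th : L -> Prop) :
  (forall T g, der T g -> der' T g) ->
  af_consistent der' bar S Th -> af_consistent der bar S Th.
Proof.
move=> der_der' [ThS Thc]; split=> // -[T [g [TTh [gT [g' [gg' Tg']]]]]].
by apply: Thc; exists T, g; do 2!split=> //; exists g'; split=> //; exact: der_der'.
Qed.

Lemma af_consistent_bigcup (der : drel L) (S : L -> Prop) (F : set (set L)) :
  F `<=` af_consistent der bar S -> total_on F subset -> F !=set0 ->
  af_consistent der bar S (\bigcup_(X in F) X).
Proof.
move=> Fc Ftot F0; split=> [x [X FX Xx]|[T [g [TF incT]]]].
  by case: (Fc X FX) => XS _; exact: XS.
have [X FX TX] := chain_subset_bigcup Ftot F0 TF.
by case: (Fc X FX) => _; apply; exists T, g.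
Qed.

Lemma af_consistent_extend_max (der : drel L) (S Th : L -> Prop) :
  af_consistent der bar S Th ->
  exists2 Th', af_max_consistent der bar S Th' & Th `<=` Th'.
Proof.
move=> Thc; have [A [Ac ThA Amax]] := Zorn_bigcup_above
  (@af_consistent_bigcup der S) Thc.
by exists A.
Qed.

End MaximalConsistent.

Local Open Scope fset_scope.

Section PlusConsistency.
Variables (L : choiceType) (der : drel L) (bar : L -> L -> Prop).
Hypotheses (der_contra : contrapositable der bar) (der_cut : cut_rule der).

Lemma fsetU1_inconsistent (T : {fset L}) (g g' : L) :
  bar g g' -> der T g' -> af_inconsistent der bar (fun x => x \in T `|` [fset g]).
Proof.
move=> gg' Tg'; exists (T `|` [fset g]), g; do 2!split=> //; first exact: fsetU1r.
(* Removing g from T loses a premise only when g \in T; contrapositability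
   then supplies a derivation of another contrary of g. *)
have [gT|gNT] := boolP (g \in T).
- by have [s' ?] := der_contra gg' Tg' gT; exists s'.
- by exists g'; rewrite fsetUC fsetU1K.
Qed.

Lemma af_consistent_plus (phi : L) (S Th : L -> Prop) (T0 : {fset L}) :
  (forall x, x \in T0 -> Th x) -> der T0 phi ->
  af_consistent der bar S Th -> af_consistent (plus_rel der phi) bar S Th.
Proof.
move=> T0Th T0phi [ThS Thc]; split=> // -[T [g [TTh [gT [g' [gg' Tg']]]]]].
apply/Thc/(af_inconsistentS _ (fsetU1_inconsistent gg' (der_cut T0phi Tg'))).
move=> x; rewrite !inE => /orP[/orP[/T0Th|/andP[_ /TTh]]|/eqP->] //.
exact: TTh.
Qed.

End PlusConsistency.

Theorem lemma11 (L : choiceType) (der : drel L) (bar : L -> L -> Prop)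
  (S : L -> Prop) (phi : L) :
  contrapositable der bar -> cut_rule der ->
  (forall Th : L -> Prop, af_max_consistent der bar S Th ->
     exists T' : {fset L}, (forall x, x \in T' -> Th x) /\ der T' phi) ->
  forall Th : L -> Prop,
    af_max_consistent der bar S Th <-> af_max_consistent (plus_rel der phi) bar S Th.
Proof.
move=> der_contra der_cut max_der_phi Th.
have max_plus_consistent Th' : af_max_consistent der bar S Th' ->
    af_consistent (plus_rel der phi) bar S Th'.
  move=> Th'max; have [T0 [T0Th' T0phi]] := max_der_phi Th' Th'max.
  exact: af_consistent_plus T0Th' T0phi Th'max.1.
have plus_consistent_consistent := af_consistent_subrel (@plus_base L der phi).
split=> [Thmax|[Thc Thmax]].
- split; first exact: max_plus_consistent.
  by move=> Th2 /plus_consistent_consistent; exact: Thmax.2.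
- split=> [|Th2 Th2c ThTh2 x Th2x]; first exact: plus_consistent_consistent.
  have [Th3 Th3max Th2Th3] := af_consistent_extend_max Th2c.
  apply: (Thmax Th3 (max_plus_consistent _ Th3max)); last exact: Th2Th3.
  by move=> y /ThTh2 /Th2Th3.
Qed.
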